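(* Let $\mathcal{C}$ be a full SCW code with symbol set $\mathcal{S}=\{\eta_0,\dots,\eta_{L-1}\}$ and weight vector $\bar{\boldsymbol{\omega}}=[\bar\omega_0,\dots,\bar\omega_{L-1}]^{\mathsf T}$, with $K=\sum_{\ell}\bar\omega_\ell$. Fix any observation vector $\mathbf r\in\mathbb Z_{\ge 0}^K$. Then: (i) the set $\mathcal A(\mathbf r,\bar c_{\mathrm s},\bar c_{\mathrm n})=\arg\max_{\mathbf s\in\mathcal C} f_{\mathbf r}(\mathbf r\mid\bar{\mathbf c},\mathbf s)$ of coherent ML solutions is the same set $\mathcal A(\mathbf r)$ for every CSI $\bar{\mathbf c}=(\bar c_{\mathrm s},\bar c_{\mathrm n})\in(0,\infty)^2$, and for every probability density $f_{\bar{\mathbf c}}$ on $(0,\infty)^2$ the set of non-coherent ML solutions $\arg\max_{\mathbf s\in\mathcal C}\int\!\!\int f_{\mathbf r}(\mathbf r\mid\bar{\mathbf c},\mathbf s)f_{\bar{\mathbf c}}(\bar c_{\mathrm s},\bar c_{\mathrm n})\,\mathrm d\bar c_{\mathrm s}\,\mathrm d\bar c_{\mathrm n}$ equals the same set $\mathcal A(\mathbf r)$; in particular the ML solutions require neither instantaneous nor statistical CSI; (ii) for every permutation $\pi$ of $\{1,\dots,K\}$ with $r[\pi(1)]\le r[\pi(2)]\le\dots\le r[\pi(K)]$ (i.e., sorting $\mathbf r$ in ascending order with arbitrary tie-breaking), the sequence $\mathbf s$ defined by $s[\pi(j)]=\eta_\ell$ whenever $\sum_{\ell'<\ell}\bar\omega_{\ell'}<j\le\sum_{\ell'\le\ell}\bar\omega_{\ell'}$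 belongs to $\mathcal A(\mathbf r)$; (iii) in particular, for a full binary CW code with $\mathcal S=\{0,1\}$, length $K$ and weight $\omega$, any codeword whose $\omega$ entries equal to $1$ are located at the positions of $\omega$ largest entries of $\mathbf r$ belongs to $\mathcal A(\mathbf r)$.
   Context: Symbol set: $\mathcal S=\{\eta_0,\eta_1,\dots,\eta_{L-1}\}$ with $L\ge 2$, $0=\eta_0<\eta_1<\dots<\eta_{L-1}=1$. A codeword is $\mathbf s=[s[1],\dots,s[K]]^{\mathsf T}\in\mathcal S^K$. Channel model: given CSI $\bar{\mathbf c}=(\bar c_{\mathrm s},\bar c_{\mathrm n})$ with $\bar c_{\mathrm s}>0,\bar c_{\mathrm n}>0$, the observations $r[1],\dots,r[K]$ are independent with $r[k]$ Poisson of mean $s[k]\bar c_{\mathrm s}+\bar c_{\mathrm n}$, so the likelihood is $f_{\mathbf r}(\mathbf r\mid\bar{\mathbf c},\mathbf s)=\prod_{k=1}^K \frac{(\bar c_{\mathrm s}s[k]+\bar c_{\mathrm n})^{r[k]}e^{-\bar c_{\mathrm s}s[k]-\bar c_{\mathrm n}}}{r[k]!}$. An SCW (strongly constant-weight) code with weight vector $\bar{\boldsymbol\omega}\in\mathbb Z_{\ge0}^L$ is a codebook $\mathcal C\subseteq\mathcal S^K$, $K=\sum_\ell\bar\omega_\ell$, in which every codeword has exactly $\bar\omega_\ell$ entries equal to $\eta_\ell$ for each $\ell$; it is full if $\mathcal C$ contains all sequences in $\mathcal S^K$ with this property. A binary CW (constant-weight) code of length $K$ and weight $\omega$ is a codebook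 $\mathcal C\subseteq\{0,1\}^K$ in which every codeword has exactly $\omega$ ones; it is full if it contains all such sequences. *)

From HB Require Import structures.
From mathcomp Require Import all_boot all_order all_algebra.
From mathcomp Require Import all_classical all_reals all_analysis.
Set Implicit Arguments. Unset Strict Implicit. Unset Printing Implicit Defensive.
Import Order.TTheory GRing.Theory Num.Theory.
Local Open Scope classical_set_scope.
Local Open Scope ring_scope.

Section Defs.
Variable R : realType.

(* Poisson likelihood f_r(r | (cs,cn), s) of observation r given codeword s,
   indices k = 0..K-1 stand for 1..K. *)
Definition lik (K : nat) (cs cn : R) (s : 'I_K -> R) (r : 'I_K -> nat) : R :=
  \prod_(k < K) ((cs * s k + cn) ^+ r k * expR (- (cs * s k) - cn)
                 / ((r k)`!)%:R).

Definition argmax {d} {T : porderType d} {X : Type} (C : set X) (g : X -> T)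
  : set X := [set x | C x /\ (forall y, C y -> (g y <= g x)%O)].

Definition fullSCW (L K : nat) (eta : 'I_L -> R) (w : 'I_L -> nat)
  : set ('I_K -> R) :=
  [set s | (forall k, exists l, s k = eta l) /\
           (forall l, #|[set k : 'I_K | s k == eta l]| = w l)].

Definition fullCW (K om : nat) : set ('I_K -> R) :=
  [set s | (forall k, s k = 0 \/ s k = 1) /\
           #|[set k : 'I_K | s k == 1]| = om].

Definition posquad : set (R * R) := `]0, +oo[%classic `*` `]0, +oo[%classic.

Definition is_density (f : R * R -> R) : Prop :=
  measurable_fun posquad f /\ (forall z, posquad z -> 0 <= f z) /\
  (\int[(@lebesgue_measure R \x @lebesgue_measure R)%E]_(z in posquad)
      (f z)%:E = 1)%E.

Definition nclik (K : nat) (f : R * R -> R) (s : 'I_K -> R) (r : 'I_K -> nat)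
  : \bar R :=
  (\int[(@lebesgue_measure R \x @lebesgue_measure R)%E]_(z in posquad)
      (lik z.1 z.2 s r * f z)%:E)%E.

End Defs.

From HB Require Import structures.
From mathcomp Require Import all_boot all_order all_algebra.
From mathcomp Require Import all_classical all_reals all_analysis.
From mathcomp Require Import perm ring zify measurable_realfun.
Import Order.TTheory GRing.Theory Num.Theory.
Local Open Scope ring_scope.

(* The Poisson likelihood factor p(n | x) of a symbol x observed as a count n
   has mean cs x + cn, increasing in x, so it is strictly totally positive of
   order two whatever the CSI: p(n | x) p(m | y) < p(n | y) p(m | x) for
   0 <= x < y and m < n.  Exchanging two entries of a codeword so that the
   larger symbol meets the larger count therefore never lowers the likelihood,
   and raises it strictly when it undoes a strict inversion.  A full SCW code
   is closed under such exchanges and its codewords share their symbol counts,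
   so the ML codewords are exactly those ordered like r, a set independent of
   (cs, cn).  Integrating against a density keeps the weak inequality and,
   as likelihoods are bounded by 1 and a density is not a.e. zero, the strict
   one too. *)

Set Implicit Arguments.
Unset Strict Implicit.
Unset Printing Implicit Defensive.

Section Rearrangement.
Variables (R : realDomainType) (K : nat).
Implicit Types (s t : 'I_K -> R) (r : 'I_K -> nat).

Definition comonotone r s := forall k k', (r k < r k')%N -> s k <= s k'.

Definition equal_counts t s :=
  forall v, #|[set k | t k == v]| = #|[set k | s k == v]|.

Definition swap_entries t (a b : 'I_K) : 'I_K -> R := t \o tperm a b.

Definition mismatch t s := [set k | t k != s k].

Lemma equal_counts_swap t a b : equal_counts (swap_entries t a b) t.
Proof.
move=> v; rewrite -(card_preimset [set k | t k == v] (@perm_inj _ (tperm a b))).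
by apply: eq_card => k; rewrite !inE.
Qed.

Lemma mismatch_eq0 t s : #|mismatch t s| = 0%N -> t = s.
Proof.
move/eqP; rewrite cards_eq0 => /eqP D0; apply/funext => k.
have : k \notin mismatch t s by rewrite D0 inE.
by rewrite inE negbK => /eqP.
Qed.

Lemma equal_counts_mismatch t s v : equal_counts t s ->
  #|[set k | t k == v] :&: mismatch t s| = #|[set k | s k == v] :&: mismatch t s|.
Proof.
move=> ts; set D := mismatch t s.
have agree : [set k | t k == v] :\: D = [set k | s k == v] :\: D.
  by apply/setP => k; rewrite !inE negbK; case: eqP => // ->.
have := cardsID D [set k | t k == v]; rewrite agree ts.
by rewrite -(cardsID D [set k | s k == v]) => /addIn.
Qed.

(* Take a the mismatch where s is largest and b a mismatch with t b = s a. *)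
Lemma exists_sorting_swap t s r : comonotone r s -> equal_counts t s -> t != s ->
  exists a b, [/\ t a <= t b, (r b <= r a)%N &
                  (#|mismatch (swap_entries t a b) s| < #|mismatch t s|)%N].
Proof.
move=> so ts neq; set D := mismatch t s.
have /card_gt0P [k Dk] : (0 < #|D|)%N.
  by rewrite lt0n; exact: contra_neq (@mismatch_eq0 t s) neq.
have [a Da a_max] : exists2 a, a \in D & forall j, j \in D -> s j <= s a.
  by case: (arg_maxP s Dk) => a; exists a.
have tsa : t a != s a by rewrite inE in Da.
have [b Db tb] : exists2 b, b \in D & t b = s a.
  have /card_gt0P [b] : (0 < #|[set k | t k == s a] :&: D|)%N.
    by rewrite equal_counts_mismatch //; apply/card_gt0P; exists a; rewrite !inE eqxx.
  by rewrite !inE => /andP[/eqP tb tsb]; exists b; rewrite ?inE.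
have tas : t a <= s a.
  have /card_gt0P [c] : (0 < #|[set k | s k == t a] :&: D|)%N.
    by rewrite -equal_counts_mismatch //; apply/card_gt0P; exists a; rewrite !inE eqxx.
  by rewrite !inE => /andP[/eqP <- tsc]; apply: a_max; rewrite inE.
exists a, b; split; first by rewrite tb.
  rewrite leqNgt; apply/negP => /so sab.
  have sba : s b <= s a by apply: a_max.
  by move: Db; rewrite inE tb eq_le sab sba.
rewrite (cardsD1 a D) Da add1n ltnS; apply: subset_leq_card.
apply/fintype.subsetP => k'; rewrite !inE /swap_entries /=.
have [->|ka] := eqVneq k' a; first by rewrite tpermL tb eqxx.
have [->|kb] := eqVneq k' b; first by rewrite tpermR => _; move: Db; rewrite inE.
by rewrite tpermD 1?eq_sym.
Qed.

Section Kernel.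
Variable kernel : R -> nat -> R.
Hypothesis kernel_gt0 : forall x n, 0 <= x -> 0 < kernel x n.
Hypothesis kernel_exchange_lt : forall x y m n, 0 <= x -> x < y -> (m < n)%N ->
  kernel x n * kernel y m < kernel y n * kernel x m.

Lemma kernel_exchange x y m n : 0 <= x -> x <= y -> (m <= n)%N ->
  kernel x n * kernel y m <= kernel y n * kernel x m.
Proof.
move=> x0; rewrite le_eqVlt => /predU1P[<- //|xy].
rewrite leq_eqVlt => /predU1P[->|mn]; first by rewrite mulrC.
exact/ltW/kernel_exchange_lt.
Qed.

Definition kernel_prod t r := \prod_k kernel (t k) (r k).

Lemma kernel_prod_swap t r a b : (forall k, 0 <= t k) -> a != b ->
  exists2 c, 0 < c &
    kernel_prod t r = kernel (t a) (r a) * kernel (t b) (r b) * c /\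
    kernel_prod (swap_entries t a b) r = kernel (t b) (r a) * kernel (t a) (r b) * c.
Proof.
move=> t0 ab; pose c := \prod_(k | (k != a) && (k != b)) kernel (t k) (r k).
have split2 (F : 'I_K -> R) :
    \prod_k F k = F a * F b * \prod_(k | (k != a) && (k != b)) F k.
  by rewrite (bigD1 a) // (bigD1 b) 1?eq_sym //= mulrA.
exists c; first by apply: prodr_gt0 => k _; apply: kernel_gt0.
rewrite /kernel_prod !split2 /swap_entries /= tpermL tpermR; split => //.
by congr (_ * _); apply: eq_bigr => k /andP[ka kb]; rewrite tpermD // eq_sym.
Qed.

Lemma kernel_prod_swap_le t r a b : (forall k, 0 <= t k) ->
  (r b <= r a)%N -> t a <= t b -> kernel_prod t r <= kernel_prod (swap_entries t a b) r.
Proof.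
move=> t0 rba tab; have [<-|ab] := eqVneq a b.
  have -> : swap_entries t a a = t.
    by apply/funext => k; rewrite /swap_entries /= tperm1 perm1.
  exact: lexx.
have [c c0 [-> ->]] := kernel_prod_swap r t0 ab.
by rewrite ler_pM2r //; apply: kernel_exchange.
Qed.

Lemma kernel_prod_swap_lt t r a b : (forall k, 0 <= t k) ->
  (r b < r a)%N -> t a < t b -> kernel_prod t r < kernel_prod (swap_entries t a b) r.
Proof.
move=> t0 rba tab; have ab : a != b by apply: contraTneq rba => ->; rewrite ltnn.
have [c c0 [-> ->]] := kernel_prod_swap r t0 ab.
by rewrite ltr_pM2r //; apply: kernel_exchange_lt.
Qed.

Lemma kernel_prod_le_comonotone t s r : (forall k, 0 <= t k) ->
  comonotone r s -> equal_counts t s -> kernel_prod t r <= kernel_prod s r.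
Proof.
move=> + so; have [n] := ubnP #|mismatch t s|.
elim: n t => // n IH t lt_n t0 ts; have [-> //|neq] := eqVneq t s.
have [a [b [tab rba lt_mis]]] := exists_sorting_swap so ts neq.
apply: le_trans (kernel_prod_swap_le t0 rba tab) (IH _ _ _ _).
- exact: leq_trans lt_mis lt_n.
- by move=> k; apply: t0.
- by move=> v; rewrite equal_counts_swap.
Qed.

End Kernel.

Section ArgmaxComonotone.
Variables (d : Order.disp_t) (O : porderType d).
Variables (C : set ('I_K -> R)) (g : ('I_K -> R) -> O) (r : 'I_K -> nat).
Hypothesis C_swap : forall t a b, C t -> C (swap_entries t a b).
Hypothesis g_le : forall t s, C t -> C s -> comonotone r s -> (g t <= g s)%O.
Hypothesis g_swap_lt : forall t a b, C t ->
  (r b < r a)%N -> t a < t b -> (g t < g (swap_entries t a b))%O.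

Lemma argmax_comonotone : argmax C g = [set s | C s /\ comonotone r s]%classic.
Proof.
apply/funext => s; apply/propext; split=> [[Cs s_max]|[Cs so]].
  split=> // k k' rkk'; rewrite leNgt; apply/negP => sk'k.
  by have := g_swap_lt Cs rkk' sk'k; rewrite le_gtF //; apply/s_max/C_swap.
by split=> // t Ct; apply: g_le.
Qed.

End ArgmaxComonotone.

End Rearrangement.

Section PoissonKernel.
Variable R : realType.

Lemma ltr_exprM_swap (a b : R) m n : 0 < a -> a < b -> (m < n)%N ->
  a ^+ n * b ^+ m < b ^+ n * a ^+ m.
Proof.
move=> a0 ab mn; rewrite -(subnKC (ltnW mn)) !exprD.
have -> : a ^+ m * a ^+ (n - m) * b ^+ m = a ^+ (n - m) * (a ^+ m * b ^+ m) by ring.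
have -> : b ^+ m * b ^+ (n - m) * a ^+ m = b ^+ (n - m) * (a ^+ m * b ^+ m) by ring.
rewrite ltr_pM2r ?mulr_gt0 ?exprn_gt0 ?(lt_trans a0 ab) //.
by rewrite ltrXn2r ?ltW // subn_eq0 -ltnNge.
Qed.

(* [poisson_pmf] is 1 at a nonpositive rate, so these bounds hold for every rate. *)
Lemma poisson_pmf_gt0 (rate : R) k : 0 < poisson_pmf rate k.
Proof.
rewrite /poisson_pmf; case: ifPn => // rate0.
by rewrite !mulr_gt0 ?expR_gt0 ?exprn_gt0 // invr_gt0 ltr0n fact_gt0.
Qed.

Lemma poisson_pmf_le1 (rate : R) k : poisson_pmf rate k <= 1.
Proof.
rewrite /poisson_pmf; case: ifPn => // rate0.
have term_le_exp : rate ^+ k / k`!%:R <= expR rate.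
  case: k => [|k].
    by rewrite expr0 fact0 divr1; apply: le_trans (expR_ge1Dx rate); rewrite lerDl ltW.
  by apply: le_trans (expR_ge1Dxn k (ltW rate0)); rewrite lerDr.
by rewrite -[X in _ <= X](expRxMexpNx_1 rate) ler_pM2r ?expR_gt0.
Qed.

Lemma poisson_pmf_exchange_lt (a b : R) m n : 0 < a -> a < b -> (m < n)%N ->
  poisson_pmf a n * poisson_pmf b m < poisson_pmf b n * poisson_pmf a m.
Proof.
move=> a0 ab mn; rewrite /poisson_pmf a0 (lt_trans a0 ab).
set c := n`!%:R^-1 * expR (- a) * (m`!%:R^-1 * expR (- b)).
have -> : a ^+ n * n`!%:R^-1 * expR (- a) * (b ^+ m * m`!%:R^-1 * expR (- b))
  = a ^+ n * b ^+ m * c by rewrite /c; ring.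
have -> : b ^+ n * n`!%:R^-1 * expR (- b) * (a ^+ m * m`!%:R^-1 * expR (- a))
  = b ^+ n * a ^+ m * c by rewrite /c; ring.
rewrite ltr_pM2r; first exact: ltr_exprM_swap.
by rewrite /c !mulr_gt0 ?expR_gt0 // invr_gt0 ltr0n fact_gt0.
Qed.

End PoissonKernel.

Section PoissonChannel.
Variable R : realType.
Implicit Types (cs cn x : R).

Definition poisson_channel cs cn x n := poisson_pmf (cs * x + cn) n.

Lemma channel_mean_gt0 cs cn x : 0 < cs -> 0 < cn -> 0 <= x -> 0 < cs * x + cn.
Proof. by move=> cs0 cn0 x0; rewrite ltr_wpDl // mulr_ge0 // ltW. Qed.

Lemma poisson_channel_exchange_lt cs cn x y m n : 0 < cs -> 0 < cn ->
  0 <= x -> x < y -> (m < n)%N ->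
  poisson_channel cs cn x n * poisson_channel cs cn y m <
  poisson_channel cs cn y n * poisson_channel cs cn x m.
Proof.
move=> cs0 cn0 x0 xy; apply: poisson_pmf_exchange_lt; first exact: channel_mean_gt0.
by rewrite ltrD2r ltr_pM2l.
Qed.

Variable K : nat.
Implicit Types (s t : 'I_K -> R) (r : 'I_K -> nat).

Lemma lik_poissonE cs cn t r : 0 < cs -> 0 < cn -> (forall k, 0 <= t k) ->
  lik cs cn t r = kernel_prod (poisson_channel cs cn) t r.
Proof.
move=> cs0 cn0 t0; apply: eq_bigr => k _.
by rewrite /poisson_channel /poisson_pmf channel_mean_gt0 // -opprD mulrAC.
Qed.

Lemma lik_ge0 cs cn t r : 0 < cs -> 0 < cn -> (forall k, 0 <= t k) -> 0 <= lik cs cn t r.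
Proof.
move=> cs0 cn0 t0; rewrite lik_poissonE //.
by apply: prodr_ge0 => k _; apply: poisson_pmf_ge0.
Qed.

Lemma lik_le1 cs cn t r : 0 < cs -> 0 < cn -> (forall k, 0 <= t k) -> lik cs cn t r <= 1.
Proof.
move=> cs0 cn0 t0; rewrite lik_poissonE //; apply: prodr_ile1 => k _.
by rewrite poisson_pmf_ge0 poisson_pmf_le1.
Qed.

Lemma lik_le_comonotone cs cn t s r : 0 < cs -> 0 < cn ->
  (forall k, 0 <= t k) -> (forall k, 0 <= s k) -> comonotone r s -> equal_counts t s ->
  lik cs cn t r <= lik cs cn s r.
Proof.
move=> cs0 cn0 t0 s0 so ts; rewrite !lik_poissonE //.
apply: kernel_prod_le_comonotone => // [x n _|x y m n x0 xy mn].
  exact: poisson_pmf_gt0.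
exact: poisson_channel_exchange_lt.
Qed.

Lemma lik_swap_lt cs cn t r a b : 0 < cs -> 0 < cn -> (forall k, 0 <= t k) ->
  (r b < r a)%N -> t a < t b -> lik cs cn t r < lik cs cn (swap_entries t a b) r.
Proof.
move=> cs0 cn0 t0 rba tab; rewrite !lik_poissonE //; last by move=> k; apply: t0.
apply: kernel_prod_swap_lt => // [x n _|x y m n x0 xy mn].
  exact: poisson_pmf_gt0.
exact: poisson_channel_exchange_lt.
Qed.

Lemma measurable_lik t r : measurable_fun setT (fun z : R * R => lik z.1 z.2 t r).
Proof.
rewrite /lik; elim: (index_enum _) => [|k l IH].
  by under eq_fun => z do rewrite big_nil; exact: measurable_cst.
under eq_fun => z do rewrite big_cons.
apply: measurable_funM => //; apply: measurable_funM; last exact: measurable_cst.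
have mean : measurable_fun setT (fun z : R * R => z.1 * t k).
  by apply: measurable_funM; [exact: measurable_fst|exact: measurable_cst].
apply: measurable_funM.
  by apply/measurable_funX/measurable_funD => //; exact: measurable_snd.
apply: measurableT_comp; first exact: measurable_expR.
by apply: measurable_funB; [exact: measurable_funN|exact: measurable_snd].
Qed.

End PoissonChannel.

Section DensityIntegral.
Context d (T : measurableType d) (R : realType) (mu : {measure set T -> \bar R}).
Variables (D : set T) (f : T -> R).
Hypotheses (mD : measurable D) (mf : measurable_fun D f).
Hypothesis f_ge0 : forall x, D x -> 0 <= f x.
Hypothesis f_int1 : (\int[mu]_(x in D) (f x)%:E = 1)%E.

Lemma le_integral_density (g1 g2 : T -> R) :
  measurable_fun D g1 -> measurable_fun D g2 ->
  (forall x, D x -> 0 <= g1 x) -> (forall x, D x -> g1 x <= g2 x) ->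
  (\int[mu]_(x in D) (g1 x * f x)%:E <= \int[mu]_(x in D) (g2 x * f x)%:E)%E.
Proof.
move=> mg1 mg2 g1_ge0 g12; apply: ge0_le_integral => //.
- by move=> x Dx; rewrite lee_fin mulr_ge0 ?g1_ge0 ?f_ge0.
- by apply/measurable_EFinP; apply: measurable_funM.
- by apply/measurable_EFinP; apply: measurable_funM.
- by move=> x Dx; rewrite lee_fin ler_wpM2r ?g12 ?f_ge0.
Qed.

(* If the integral vanished, [h f] and hence [f] would vanish a.e.,
   so [f] could not integrate to 1. *)
Lemma integral_density_gt0 (h : T -> R) : measurable_fun D h ->
  (forall x, D x -> 0 < h x) -> (0 < \int[mu]_(x in D) (h x * f x)%:E)%E.
Proof.
move=> mh h_gt0.
have mhf : measurable_fun D (fun x => (h x * f x)%:E).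
  by apply/measurable_EFinP; apply: measurable_funM.
have hf_ge0 x : D x -> (0 <= (h x * f x)%:E)%E.
  by move=> Dx; rewrite lee_fin mulr_ge0 ?f_ge0 // ltW ?h_gt0.
rewrite lt0e integral_ge0 // andbT; apply/eqP => hf0.
have hf_ae0 : ae_eq mu D (fun x => (h x * f x)%:E) (cst 0%E).
  apply/ae_eq_integral_abs => //; rewrite -[RHS]hf0; apply: eq_integral => x Dx.
  by rewrite gee0_abs // hf_ge0 //; rewrite inE in Dx.
have f_ae0 : ae_eq mu D (fun x => (f x)%:E) (cst 0%E).
  apply: filterS hf_ae0 => x hfx Dx; have [/eqP] := hfx Dx.
  by rewrite mulf_eq0 gt_eqF ?h_gt0 //= => /eqP ->.
have := f_int1; rewrite (ae_eq_integral (cst 0%E)) //; last exact/measurable_EFinP.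
by rewrite integral0 => /eqP; rewrite eq_sym onee_eq0.
Qed.

Lemma lt_integral_density (g1 g2 : T -> R) :
  measurable_fun D g1 -> measurable_fun D g2 ->
  (forall x, D x -> 0 <= g1 x) -> (forall x, D x -> g1 x < g2 x) ->
  (forall x, D x -> g2 x <= 1) ->
  (\int[mu]_(x in D) (g1 x * f x)%:E < \int[mu]_(x in D) (g2 x * f x)%:E)%E.
Proof.
move=> mg1 mg2 g1_ge0 g12 g2_le1.
have g1f_fin : (\int[mu]_(x in D) (g1 x * f x)%:E)%E \is a fin_num.
  rewrite ge0_fin_numE; last first.
    by apply: integral_ge0 => x Dx; rewrite lee_fin mulr_ge0 ?g1_ge0 ?f_ge0.
  apply: le_lt_trans (ltry 1); rewrite -[X in (_ <= X)%E]f_int1.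
  apply: le_trans (le_integral_density (g2 := fun=> 1) _ _ _ _) _ => //.
  - by move=> x Dx; apply: le_trans (ltW (g12 x Dx)) (g2_le1 x Dx).
  - by under eq_integral => x _ do rewrite mul1r.
have -> : (fun x => (g2 x * f x)%:E) =
          (fun x => (g1 x * f x)%:E + ((g2 x - g1 x) * f x)%:E)%E.
  by apply/funext => x; rewrite -EFinD -mulrDl addrC subrK.
rewrite ge0_integralD // ?lteDl //.
- apply: integral_density_gt0 => [|x Dx]; first exact: measurable_funB.
  by rewrite subr_gt0 g12.
- by move=> x Dx; rewrite lee_fin mulr_ge0 ?g1_ge0 ?f_ge0.
- by apply/measurable_EFinP; apply: measurable_funM.
- by move=> x Dx; rewrite lee_fin mulr_ge0 ?f_ge0 // subr_ge0 ltW ?g12.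
- by apply/measurable_EFinP; apply: measurable_funM => //; apply: measurable_funB.
Qed.

End DensityIntegral.

Lemma measurable_posquad (R : realType) : measurable (@posquad R).
Proof. by apply: measurableX; exact: measurable_itv. Qed.

Lemma posquadP (R : realType) (z : R * R) : posquad z -> 0 < z.1 /\ 0 < z.2.
Proof. by case: z => a b [/=]; rewrite !in_itv /= !andbT. Qed.

Section MaximumLikelihood.
Variables (R : realType) (K : nat) (C : set ('I_K -> R)) (r : 'I_K -> nat).
Hypothesis C_ge0 : forall t, C t -> forall k, 0 <= t k.
Hypothesis C_swap : forall t a b, C t -> C (swap_entries t a b).
Hypothesis C_equal_counts : forall t s, C t -> C s -> equal_counts t s.

Lemma coherent_argmax_comonotone cs cn : 0 < cs -> 0 < cn ->
  argmax C (fun s => lik cs cn s r) = [set s | C s /\ comonotone r s]%classic.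
Proof.
move=> cs0 cn0; apply: argmax_comonotone => // [t s Ct Cs so|t a b Ct rba tab].
  exact: lik_le_comonotone (C_ge0 Ct) (C_ge0 Cs) so (C_equal_counts Ct Cs).
exact: lik_swap_lt (C_ge0 Ct) rba tab.
Qed.

Lemma noncoherent_argmax_comonotone f : is_density f ->
  argmax C (fun s => nclik f s r) = [set s | C s /\ comonotone r s]%classic.
Proof.
move=> [mf [f_ge0 f_int1]]; have mD := @measurable_posquad R.
have mlik (t : 'I_K -> R) :
    measurable_fun (@posquad R) (fun z : R * R => lik z.1 z.2 t r).
  exact: measurable_funTS (measurable_lik t r).
apply: argmax_comonotone => // [t s Ct Cs so|t a b Ct rba tab].
  apply: le_integral_density => //; [exact: mlik|exact: mlik| |];
    move=> z /posquadP[z1 z2].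
  - exact: lik_ge0 (C_ge0 Ct).
  - exact: lik_le_comonotone (C_ge0 Ct) (C_ge0 Cs) so (C_equal_counts Ct Cs).
apply: lt_integral_density => //; [exact: mlik|exact: mlik| | |];
  move=> z /posquadP[z1 z2].
- exact: lik_ge0 (C_ge0 Ct).
- exact: lik_swap_lt (C_ge0 Ct) rba tab.
- exact: lik_le1 (C_ge0 (C_swap a b Ct)).
Qed.

End MaximumLikelihood.

Lemma card_classic_set (T : finType) (P : pred T) :
  #|[set x | P x]%classic| = #|[set x | P x]|.
Proof. by apply: eq_card => x; rewrite inE; apply/idP/idP; rewrite in_setE. Qed.

Section FullCodes.
Variables (R : realType) (K : nat).
Implicit Types (s t : 'I_K -> R).

Section SCW.
Variables (L : nat) (eta : 'I_L -> R) (w : 'I_L -> nat).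

Lemma fullSCW_swap t a b : fullSCW eta w t -> fullSCW eta w (swap_entries t a b).
Proof.
case=> t_eta t_cnt; split=> [k|l]; first exact: t_eta.
by rewrite card_classic_set equal_counts_swap -card_classic_set.
Qed.

Lemma fullSCW_equal_counts t s : fullSCW eta w t -> fullSCW eta w s -> equal_counts t s.
Proof.
case=> t_eta t_cnt [s_eta s_cnt] v.
have [[l ->]|not_eta] := pselect (exists l, v = eta l).
  by rewrite -!card_classic_set t_cnt s_cnt.
have eta_neq l : (eta l == v) = false by apply/negbTE/eqP => e; apply: not_eta; exists l.
apply: eq_card => k; rewrite !inE.
by have [l ->] := t_eta k; have [l' ->] := s_eta k; rewrite !eta_neq.
Qed.

Hypothesis eta_mono : forall i j : 'I_L, (i < j)%N -> eta i < eta j.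
Hypothesis eta0 : forall i : 'I_L, val i = 0%N -> eta i = 0.

Lemma fullSCW_ge0 t : fullSCW eta w t -> forall k, 0 <= t k.
Proof.
case=> t_eta _ k; have [l ->] := t_eta k.
pose l0 : 'I_L := Ordinal (leq_ltn_trans (leq0n l) (ltn_ord l)).
by rewrite -(eta0 (i := l0)) // (le_mono eta_mono) leEord.
Qed.

End SCW.

Lemma fullCW_swap om t a b : fullCW om t -> fullCW om (swap_entries t a b).
Proof.
case=> t01 t_cnt; split=> [k|]; first exact: t01.
by rewrite card_classic_set equal_counts_swap -card_classic_set.
Qed.

Lemma fullCW_ge0 om t : fullCW om t -> forall k, 0 <= t k.
Proof. by case=> t01 _ k; case: (t01 k) => ->. Qed.

Lemma binary_comonotone t (r : 'I_K -> nat) : (forall k, t k = 0 \/ t k = 1) ->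
  (forall k k', t k = 1 -> t k' = 0 -> (r k' <= r k)%N) -> comonotone r t.
Proof.
move=> t01 ones_top k k' rkk'.
have [->|tk1] := t01 k; first by case: (t01 k') => ->.
have [tk'0|->] := t01 k'; last by rewrite tk1.
by have := ones_top _ _ tk1 tk'0; rewrite leqNgt rkk'.
Qed.

Lemma card_zeros_binary t : (forall k, t k = 0 \/ t k = 1) ->
  #|[set k | t k == 0]| = (K - #|[set k | t k == 1%R]|)%N.
Proof.
move=> t01; have -> : [set k | t k == 0] = ~: [set k | t k == 1].
  apply/setP => k; rewrite !inE.
  by case: (t01 k) => ->; rewrite ?eqxx ?oner_eq0 // eq_sym oner_eq0.
by rewrite cardsCs finset.setCK card_ord.
Qed.

Lemma fullCW_equal_counts om t s : fullCW om t -> fullCW om s -> equal_counts t s.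
Proof.
case=> t01 t_cnt [s01 s_cnt] v.
have [->|v1] := eqVneq v 1; first by rewrite -!card_classic_set t_cnt s_cnt.
have [->|v0] := eqVneq v 0.
  by rewrite !card_zeros_binary // -!card_classic_set t_cnt s_cnt.
apply: eq_card => k; rewrite !inE.
by case: (t01 k) => ->; case: (s01 k) => ->;
  rewrite !(eq_sym _ v) ?(negbTE v0) ?(negbTE v1).
Qed.

End FullCodes.

Section Blocks.
Variables (L : nat) (w : 'I_L -> nat).

Definition block_lo (l : 'I_L) := (\sum_(l' < L | (l' < l)%N) w l')%N.
Definition block_hi (l : 'I_L) := (\sum_(l' < L | (l' <= l)%N) w l')%N.

Lemma leq_sum_weights (P Q : pred 'I_L) : (forall i, P i -> Q i) ->
  (\sum_(i | P i) w i <= \sum_(i | Q i) w i)%N.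
Proof. exact: (sub_le_big (le := leq) leqnn (fun m n => leq_addr n m)). Qed.

Lemma block_hiE l : block_hi l = (block_lo l + w l)%N.
Proof.
rewrite /block_hi (bigD1 l) //= addnC; congr (_ + _)%N.
by apply: eq_bigl => i; rewrite ltn_neqAle andbC.
Qed.

Lemma block_hi_le_lo (l1 l2 : 'I_L) : (l1 < l2)%N -> (block_hi l1 <= block_lo l2)%N.
Proof. by move=> lt12; apply: leq_sum_weights => i /leq_ltn_trans; apply. Qed.

Lemma block_hi_le_sum l : (block_hi l <= \sum_(l' < L) w l')%N.
Proof. exact: leq_sum_weights. Qed.

Lemma exists_block j : (j < \sum_(l < L) w l)%N ->
  exists l, (block_lo l <= j < block_hi l)%N.
Proof.
move=> j_lt.
have : (\sum_(l < L) w l != 0)%N by rewrite -lt0n (leq_ltn_trans (leq0n j) j_lt).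
rewrite sum_nat_eq0 => /forallPn [l0 _].
pose l_zero : 'I_L := Ordinal (leq_ltn_trans (leq0n l0) (ltn_ord l0)).
have lo_zero : (block_lo l_zero <= j)%N by rewrite /block_lo big_pred0.
have [l lo_l l_max] := @arg_maxnP _ l_zero (fun l => block_lo l <= j)%N val lo_zero.
exists l; rewrite lo_l /=.
have [l_succ|l_last] := ltnP l.+1 L.
  rewrite ltnNge; apply/negP => hi_l.
  suff : (l.+1 <= l)%N by rewrite ltnn.
  apply: (l_max (Ordinal l_succ)); apply: leq_trans hi_l.
  by apply: leq_sum_weights => i; rewrite /= ltnS.
apply: leq_trans j_lt _; apply: leq_sum_weights => i _ /=.
by rewrite -ltnS (leq_trans (ltn_ord i) l_last).
Qed.

Lemma block_uniq j (l1 l2 : 'I_L) :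
  (block_lo l1 <= j < block_hi l1)%N -> (block_lo l2 <= j < block_hi l2)%N -> l1 = l2.
Proof.
move=> /andP[lo1 hi1] /andP[lo2 hi2]; apply: val_inj.
case: (ltngtP l1 l2) => // lt_l.
- by have := block_hi_le_lo lt_l; lia.
- by have := block_hi_le_lo lt_l; lia.
Qed.

End Blocks.

Lemma card_ord_range K a b : (b <= K)%N -> #|[set j : 'I_K | (a <= j < b)%N]| = (b - a)%N.
Proof.
move=> bK; have -> : (b - a = \sum_(i < b | a <= i) 1)%N.
  by rewrite -[LHS]muln1 -sum_nat_const_nat big_geq_mkord.
rewrite -sum1_card (big_ord_widen_cond _ (fun i => a <= i)%N (fun=> 1%N) bK).
by apply: eq_bigl => j; rewrite inE.
Qed.

Section SortingRule.
Variables (R : realType) (L : nat) (eta : 'I_L -> R) (w : 'I_L -> nat).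
Variables (K : nat) (r : 'I_K -> nat) (pi : {perm 'I_K}) (s : 'I_K -> R).
Hypothesis eta_mono : forall i j : 'I_L, (i < j)%N -> eta i < eta j.
Hypothesis K_sum : K = (\sum_(l < L) w l)%N.
Hypothesis pi_sorts : forall i j : 'I_K, (i <= j)%N -> (r (pi i) <= r (pi j))%N.
Hypothesis s_fill : forall (j : 'I_K) (l : 'I_L),
  (block_lo w l <= j)%N -> (j < block_hi w l)%N -> s (pi j) = eta l.

Lemma sorted_fill_block (j : 'I_K) :
  exists2 l, (block_lo w l <= j < block_hi w l)%N & s (pi j) = eta l.
Proof.
have [l /andP[lo hi]] := exists_block (leq_trans (ltn_ord j) (eq_leq K_sum)).
by exists l; [rewrite lo hi | exact: s_fill].
Qed.

Lemma sorted_fill_fullSCW : fullSCW eta w s.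
Proof.
split=> [k|l].
  by have [l _ e] := sorted_fill_block (pi^-1 k)%g; exists l; rewrite -e permKV.
rewrite card_classic_set -(card_preimset _ (@perm_inj _ pi)).
rewrite -[w l](addKn (block_lo w l)) -block_hiE.
rewrite -(card_ord_range (block_lo w l) (block_hi_le_sum w l)) -K_sum.
apply: eq_card => j; rewrite !inE; have [l' bl' ->] := sorted_fill_block j.
rewrite (inj_eq (inc_inj (le_mono eta_mono))).
by apply/eqP/idP => [<- //|/(block_uniq bl')].
Qed.

Lemma sorted_fill_comonotone : comonotone r s.
Proof.
move=> k k' rkk'.
have [l /andP[lo hi] e] := sorted_fill_block (pi^-1 k)%g.
have [l' /andP[lo' hi'] e'] := sorted_fill_block (pi^-1 k')%g.
rewrite !permKV in e e'; rewrite e e' (le_mono eta_mono) leEord leqNgt.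
apply/negP => /(block_hi_le_lo w) lt_l.
have : ((pi^-1 k)%g < (pi^-1 k')%g)%N.
  by rewrite ltnNge; apply/negP => /pi_sorts; rewrite !permKV leqNgt rkk'.
lia.
Qed.

End SortingRule.

Unset Implicit Arguments.
Set Strict Implicit.
Local Open Scope classical_set_scope.

Theorem theorem1 (R : realType) (L : nat) (eta : 'I_L -> R) (w : 'I_L -> nat)
  (K : nat) (r : 'I_K -> nat) :
  (2 <= L)%N ->
  (forall i j : 'I_L, (i < j)%N -> eta i < eta j) ->
  (forall i : 'I_L, val i = 0%N -> eta i = 0) ->
  (forall i : 'I_L, val i = L.-1 -> eta i = 1) ->
  K = (\sum_(l < L) w l)%N ->
  (exists A : set ('I_K -> R),
     (* (i) coherent ML set independent of the CSI *)
     (forall cs cn : R, 0 < cs -> 0 < cn ->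
        argmax (fullSCW (K:=K) eta w) (fun s => lik cs cn s r) = A) /\
     (* (i) non-coherent ML set equals it for every density on (0,oo)^2 *)
     (forall f : R * R -> R, is_density f ->
        argmax (fullSCW (K:=K) eta w) (fun s => nclik f s r) = A) /\
     (* (ii) sorting rule *)
     (forall pi : {perm 'I_K},
        (forall i j : 'I_K, (i <= j)%N -> (r (pi i) <= r (pi j))%N) ->
        forall s : 'I_K -> R,
          (forall (j : 'I_K) (l : 'I_L),
             (\sum_(l' < L | (l' < l)%N) w l' <= j)%N ->
             (j < \sum_(l' < L | (l' <= l)%N) w l')%N ->
             s (pi j) = eta l) ->
          A s)) /\
  (* (iii) binary CW special case *)
  (forall (K' om : nat) (r' : 'I_K' -> nat) (s : 'I_K' -> R),
     @fullCW R K' om s ->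
     (forall k k' : 'I_K', s k = 1 -> s k' = 0 -> (r' k' <= r' k)%N) ->
     forall cs cn : R, 0 < cs -> 0 < cn ->
       argmax (@fullCW R K' om) (fun s0 => lik cs cn s0 r') s).
Proof.
move=> _ eta_mono eta0 _ K_sum.
have SCW_ge0 := fullSCW_ge0 eta_mono eta0.
split.
  exists [set s | fullSCW eta w s /\ comonotone r s]; split; [|split].
  - by move=> cs cn cs0 cn0; apply: coherent_argmax_comonotone => //;
      [exact: SCW_ge0|exact: fullSCW_swap|exact: fullSCW_equal_counts].
  - by move=> f f_density; apply: noncoherent_argmax_comonotone => //;
      [exact: SCW_ge0|exact: fullSCW_swap|exact: fullSCW_equal_counts].
  - move=> pi pi_sorts s s_fill; split.
      exact: sorted_fill_fullSCW eta_mono K_sum s_fill.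
    exact: sorted_fill_comonotone eta_mono K_sum pi_sorts s_fill.
move=> K' om r' s s_CW ones_top cs cn cs0 cn0.
rewrite coherent_argmax_comonotone //;
  [|exact: fullCW_ge0|exact: fullCW_swap|exact: fullCW_equal_counts].
split=> //; apply: binary_comonotone ones_top; exact: s_CW.1.
Qed.
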